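(* For every $\lambda>0$, the function $\beta\mapsto\tilde\alpha(\beta,\lambda)$ is strictly decreasing on the set $\{\beta>0:\ \lambda+\beta\sqrt{\lambda}\ge 1\}$.
   Context: For $\lambda>0$ and real $n\ge 0$, the continuous Erlang-C function is $\bar\alpha(n,\lambda)=\min\Big\{1,\big[\lambda\int_0^\infty t e^{-\lambda t}(1+t)^{n-1}\,dt\big]^{-1}\Big\}$ (for $n\ge\lambda$ the minimum is attained by the second term; for integer $n>\lambda$ it equals the Erlang-C probability of waiting in an $M/M/n$ queue with arrival rate $\lambda$ and service rate 1). Set $\tilde\alpha(\beta,\lambda)=\bar\alpha(\lambda+\beta\sqrt\lambda,\lambda)$. *)

From Stdlib Require Import Reals Lra ClassicalEpsilon.
Open Scope R_scope.

Definition improper_int0 (f : R -> R) (L : R) : Prop :=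
  (forall b : R, 0 <= b -> inhabited (Riemann_integrable f 0 b)) /\
  (forall eps : R, 0 < eps -> exists M : R, forall (b : R)
      (pr : Riemann_integrable f 0 b), M <= b -> Rabs (RiemannInt pr - L) < eps).

(* The value of the improper integral (chosen by classical description;
   meaningful when the integral converges). *)
Definition int0_inf (f : R -> R) : R :=
  epsilon (inhabits 0) (fun L => improper_int0 f L).

Definition alpha_bar (n lam : R) : R :=
  Rmin 1 (/ (lam * int0_inf (fun t => t * exp (- lam * t) * Rpower (1 + t) (n - 1)))).

Definition alpha_tilde (beta lam : R) : R :=
  alpha_bar (lam + beta * sqrt lam) lam.

(* Write I(n) = int_0^oo t e^{-lam t} (1+t)^{n-1} dt, so that
   alpha_bar n lam = min {1, 1 / (lam I(n))} and alpha_tilde beta lam is this at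
   n = lam + beta sqrt lam, an increasing function of beta.  The theorem thus
   follows from two facts about I, valid for every lam > 0:
   - lam I(n) >= 1 when n >= lam (so the minimum is attained by 1/(lam I(n))):
     the integrand dominates the derivative of -e^{-lam t}(1+t)^n / lam;
   - I is strictly increasing in n >= 0: the integrands increase pointwise in n,
     by a definite amount on [1/2, 1]. *)

From Stdlib Require Import Reals Lra Classical ClassicalEpsilon.
From Coquelicot Require Import Coquelicot.
Open Scope R_scope.

Lemma improper_int0_limit (f : R -> R) (L : R) :
  improper_int0 f L -> forall eps, 0 < eps ->
  exists M, forall b, M <= b -> Rabs (RInt f 0 b - L) < eps.
Proof.
  intros [f_int f_lim] eps Heps.
  destruct (f_lim eps Heps) as [M HM].
  exists (Rmax M 0); intros b Hb.
  destruct (f_int b) as [pr]; [eapply Rle_trans; [apply Rmax_r | exact Hb] |].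
  rewrite (RInt_Reals f 0 b pr); apply HM.
  eapply Rle_trans; [apply Rmax_l | exact Hb].
Qed.

Lemma improper_int0_lt (f1 f2 : R -> R) (L1 L2 d : R) :
  improper_int0 f1 L1 -> improper_int0 f2 L2 -> 0 < d ->
  (forall b, 1 <= b -> d <= RInt f2 0 b - RInt f1 0 b) -> L1 < L2.
Proof.
  intros H1 H2 Hd Hgap.
  destruct (improper_int0_limit f1 L1 H1 (d / 2)) as [M1 HM1]; [lra |].
  destruct (improper_int0_limit f2 L2 H2 (d / 2)) as [M2 HM2]; [lra |].
  set (b := Rmax 1 (Rmax M1 M2)).
  assert (Hb1 : 1 <= b) by apply Rmax_l.
  assert (HbM1 : M1 <= b) by (eapply Rle_trans; [apply Rmax_l | apply Rmax_r]).
  assert (HbM2 : M2 <= b) by (eapply Rle_trans; [apply Rmax_r | apply Rmax_r]).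
  specialize (Hgap b Hb1). specialize (HM1 b HbM1). specialize (HM2 b HbM2).
  apply Rabs_def2 in HM1. apply Rabs_def2 in HM2.
  lra.
Qed.

Section NonnegativeIntegrand.

Variable f : R -> R.
Hypothesis f_int : forall b, 0 <= b -> ex_RInt f 0 b.
Hypothesis f_ge0 : forall t, 0 <= t -> 0 <= f t.

Lemma partial_int_mono (b1 b2 : R) :
  0 <= b1 -> b1 <= b2 -> RInt f 0 b1 <= RInt f 0 b2.
Proof.
  intros Hb1 Hb12.
  assert (Hint : ex_RInt f 0 b2) by (apply f_int; lra).
  rewrite <- (RInt_Chasles f 0 b1 b2);
    [| exact (ex_RInt_Chasles_1 f 0 b1 b2 (conj Hb1 Hb12) Hint)
     | exact (ex_RInt_Chasles_2 f 0 b1 b2 (conj Hb1 Hb12) Hint)].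
  assert (Hpos : 0 <= RInt f b1 b2).
  { apply RInt_ge_0; [lra | exact (ex_RInt_Chasles_2 f 0 b1 b2 (conj Hb1 Hb12) Hint) |].
    intros x Hx; apply f_ge0; lra. }
  unfold plus; simpl; lra.
Qed.

Hypothesis f_bounded : exists C, forall b, 0 <= b -> RInt f 0 b <= C.

(* A nonnegative integrand with bounded partial integrals has a convergent
   improper integral: the partial integrals increase to their supremum. *)
Lemma int0_inf_spec : improper_int0 f (int0_inf f).
Proof.
  unfold int0_inf; apply epsilon_spec.
  destruct f_bounded as [C HC].
  set (E := fun y => exists b, 0 <= b /\ y = RInt f 0 b).
  destruct (completeness E) as [L [L_ub L_least]].
  { exists C; intros y [b [Hb ->]]; apply HC; lra. }
  { exists (RInt f 0 0), 0; split; [lra | reflexivity]. }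
  exists L; split.
  - intros b Hb; constructor; apply ex_RInt_Reals_0, f_int; lra.
  - intros eps Heps.
    assert (Hnear : exists b0, 0 <= b0 /\ L - eps < RInt f 0 b0).
    { apply NNPP; intros Hfar.
      assert (Hub : is_upper_bound E (L - eps)).
      { intros y [b [Hb ->]]; apply Rnot_lt_le; intros Hlt; apply Hfar; exists b; auto. }
      specialize (L_least _ Hub); lra. }
    destruct Hnear as [b0 [Hb0 Hlt]]; exists b0.
    intros b pr Hb; rewrite <- RInt_Reals.
    assert (Hmono : RInt f 0 b0 <= RInt f 0 b) by (apply partial_int_mono; lra).
    assert (Hle : RInt f 0 b <= L) by (apply L_ub; exists b; split; [lra | reflexivity]).
    apply Rabs_def1; lra.
Qed.

Lemma partial_int_le_int0_inf (b : R) : 0 <= b -> RInt f 0 b <= int0_inf f.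
Proof.
  intros Hb; apply Rnot_lt_le; intros Hlt.
  destruct (improper_int0_limit f _ int0_inf_spec (RInt f 0 b - int0_inf f)) as [M HM];
    [lra |].
  specialize (HM (Rmax M b) (Rmax_l _ _)); apply Rabs_def2 in HM.
  assert (Hmono : RInt f 0 b <= RInt f 0 (Rmax M b))
    by (apply partial_int_mono; [lra | apply Rmax_r]).
  lra.
Qed.

End NonnegativeIntegrand.

Lemma RInt_ge_on_subinterval (h : R -> R) (a c e b m : R) :
  a <= c -> c <= e -> e <= b -> ex_RInt h a b ->
  (forall t, a <= t <= b -> 0 <= h t) -> (forall t, c <= t <= e -> m <= h t) ->
  m * (e - c) <= RInt h a b.
Proof.
  intros Hac Hce Heb Hint Hge0 Hgem.
  assert (Hint_ae : ex_RInt h a e) by (apply (ex_RInt_Chasles_1 h a e b); [lra | exact Hint]).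
  assert (Hint_eb : ex_RInt h e b) by (apply (ex_RInt_Chasles_2 h a e b); [lra | exact Hint]).
  assert (Hint_ac : ex_RInt h a c) by (apply (ex_RInt_Chasles_1 h a c e); [lra | exact Hint_ae]).
  assert (Hint_ce : ex_RInt h c e) by (apply (ex_RInt_Chasles_2 h a c e); [lra | exact Hint_ae]).
  rewrite <- (RInt_Chasles h a e b Hint_ae Hint_eb), <- (RInt_Chasles h a c e Hint_ac Hint_ce).
  assert (H_ac : 0 <= RInt h a c) by (apply RInt_ge_0; [lra | exact Hint_ac | intros; apply Hge0; lra]).
  assert (H_eb : 0 <= RInt h e b) by (apply RInt_ge_0; [lra | exact Hint_eb | intros; apply Hge0; lra]).
  assert (H_ce : RInt (fun _ => m) c e <= RInt h c e).
  { apply RInt_le; [lra | apply ex_RInt_const | exact Hint_ce | intros; apply Hgem; lra]. }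
  rewrite RInt_const in H_ce; unfold scal in H_ce; simpl in H_ce; unfold mult in H_ce; simpl in H_ce.
  unfold plus; simpl; lra.
Qed.

Lemma is_RInt_inv_sq (C b : R) :
  0 <= b -> is_RInt (fun t => C / (1 + t) ^ 2) 0 b (C - C / (1 + b)).
Proof.
  intros Hb.
  replace (C - C / (1 + b)) with (minus ((fun t => - C / (1 + t)) b) ((fun t => - C / (1 + t)) 0))
    by (unfold minus, plus, opp; simpl; field; lra).
  apply (is_RInt_derive (V := R_CompleteNormedModule) (fun t => - C / (1 + t))); intros x Hx;
    rewrite Rmin_left, Rmax_right in Hx by lra.
  - auto_derive; [lra | field; lra].
  - apply (ex_derive_continuous (K := R_AbsRing) (V := R_NormedModule)).
    auto_derive; apply Rgt_not_eq, Rmult_lt_0_compat; lra.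
Qed.

(* x^K <= exp (K (x - 1)), from ln x <= x - 1. *)
Lemma Rpower_le_exp (x K : R) : 0 < x -> 0 <= K -> Rpower x K <= exp (K * (x - 1)).
Proof.
  intros Hx HK; unfold Rpower.
  assert (Hln : ln x <= x - 1) by (pose proof (exp_ineq1_le (ln x)); rewrite exp_ln in H; lra).
  destruct (Rle_lt_or_eq_dec (K * ln x) (K * (x - 1))) as [Hlt | ->];
    [apply Rmult_le_compat_l; lra | left; apply exp_increasing, Hlt | lra].
Qed.

Lemma exp_poly_decay (lam n : R) : 0 < lam -> 0 <= n -> exists C, 0 < C /\
  forall t, 0 <= t -> exp (- lam * t) * Rpower (1 + t) n <= C / (1 + t) ^ 2.
Proof.
  intros Hlam Hn; set (K := n + 2).
  exists (exp lam * Rpower (K / lam) K); split.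
  { apply Rmult_lt_0_compat; [apply exp_pos | apply exp_pos]. }
  intros t Ht.
  assert (Hsq : 0 < (1 + t) ^ 2) by (apply pow_lt; lra).
  assert (HK : Rpower (1 + t) n * (1 + t) ^ 2 = Rpower (K / lam) K * Rpower (lam * (1 + t) / K) K).
  { rewrite Rpower_mult_distr by (unfold K; try apply Rdiv_lt_0_compat; nra).
    replace (K / lam * (lam * (1 + t) / K)) with (1 + t) by (unfold K; field; lra).
    rewrite <- (Rpower_pow 2) by lra; rewrite <- Rpower_plus; f_equal; unfold K; simpl; ring. }
  assert (Hexp : Rpower (lam * (1 + t) / K) K <= exp (lam * (1 + t) - K)).
  { replace (lam * (1 + t) - K) with (K * (lam * (1 + t) / K - 1)) by (unfold K; field; lra).
    apply Rpower_le_exp; [apply Rdiv_lt_0_compat | ]; unfold K; nra. }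
  assert (HeK : exp (lam * (1 + t) - K) <= exp (lam * (1 + t))).
  { left; apply exp_increasing; unfold K; lra. }
  assert (Hshift : exp (lam * (1 + t)) * exp (- lam * t) = exp lam)
    by (rewrite <- exp_plus; f_equal; ring).
  apply (Rmult_le_reg_r ((1 + t) ^ 2)); [exact Hsq |].
  replace (exp lam * Rpower (K / lam) K / (1 + t) ^ 2 * (1 + t) ^ 2)
    with (Rpower (K / lam) K * (exp (lam * (1 + t)) * exp (- lam * t)))
    by (rewrite Hshift; field; lra).
  replace (exp (- lam * t) * Rpower (1 + t) n * (1 + t) ^ 2)
    with (exp (- lam * t) * (Rpower (K / lam) K * Rpower (lam * (1 + t) / K) K))
    by (rewrite <- HK; ring).
  assert (HP : 0 < Rpower (K / lam) K * exp (- lam * t))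
    by (apply Rmult_lt_0_compat; apply exp_pos).
  nra.
Qed.

Lemma Rpower_pred (x n : R) : 0 < x -> Rpower x (n - 1) = Rpower x n / x.
Proof.
  intros Hx; replace (n - 1) with (n + Ropp 1) by ring.
  rewrite Rpower_plus, Rpower_Ropp, Rpower_1 by lra; reflexivity.
Qed.

Lemma Rpower_gt0 (x y : R) : 0 < Rpower x y.
Proof. unfold Rpower; apply exp_pos. Qed.

Section ErlangIntegrand.

Variable lam : R.
Hypothesis Hlam : 0 < lam.

Definition erlang_integrand (n t : R) : R := t * exp (- lam * t) * Rpower (1 + t) (n - 1).

Lemma ex_RInt_erlang (n a b : R) : 0 <= a -> a <= b -> ex_RInt (erlang_integrand n) a b.
Proof.
  intros Ha Hab; apply (ex_RInt_continuous (V := R_CompleteNormedModule)); intros t Ht.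
  rewrite Rmin_left in Ht by lra.
  apply (ex_derive_continuous (K := R_AbsRing) (V := R_NormedModule)).
  unfold erlang_integrand, Rpower; auto_derive; lra.
Qed.

Lemma erlang_integrand_ge0 (n t : R) : 0 <= t -> 0 <= erlang_integrand n t.
Proof.
  intros Ht; unfold erlang_integrand.
  pose proof (exp_pos (- lam * t)); pose proof (Rpower_gt0 (1 + t) (n - 1)).
  apply Rmult_le_pos; [apply Rmult_le_pos |]; lra.
Qed.

(* Bounding t by 1 + t reduces the integrand to e^{-lam t} (1+t)^n. *)
Lemma erlang_integrand_le (n t : R) :
  0 <= t -> erlang_integrand n t <= exp (- lam * t) * Rpower (1 + t) n.
Proof.
  intros Ht; unfold erlang_integrand.
  rewrite (Rpower_pred (1 + t) n) by lra.
  pose proof (exp_pos (- lam * t)); pose proof (Rpower_gt0 (1 + t) n).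
  apply (Rmult_le_reg_r (1 + t)); [lra |].
  replace (t * exp (- lam * t) * (Rpower (1 + t) n / (1 + t)) * (1 + t))
    with (t * (exp (- lam * t) * Rpower (1 + t) n)) by (field; lra).
  nra.
Qed.

(* The partial integrals are bounded, via the decay bound C / (1+t)^2. *)
Lemma erlang_partial_bounded (n : R) : 0 <= n ->
  exists C, forall b, 0 <= b -> RInt (erlang_integrand n) 0 b <= C.
Proof.
  intros Hn; destruct (exp_poly_decay lam n Hlam Hn) as [C [HC Hdecay]].
  exists C; intros b Hb.
  apply Rle_trans with (RInt (fun t => C / (1 + t) ^ 2) 0 b).
  - apply RInt_le; [lra | apply ex_RInt_erlang; lra | eexists; apply is_RInt_inv_sq; lra |].
    intros t Ht; eapply Rle_trans; [apply erlang_integrand_le | apply Hdecay]; lra.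
  - rewrite (is_RInt_unique _ _ _ _ (is_RInt_inv_sq C b Hb)).
    assert (0 < C / (1 + b)) by (apply Rdiv_lt_0_compat; lra); lra.
Qed.

Lemma erlang_improper (n : R) : 0 <= n ->
  improper_int0 (erlang_integrand n) (int0_inf (erlang_integrand n)).
Proof.
  intros Hn; apply int0_inf_spec.
  - intros b Hb; apply ex_RInt_erlang; lra.
  - apply erlang_integrand_ge0.
  - apply erlang_partial_bounded, Hn.
Qed.

Lemma erlang_partial_le_int (n b : R) : 0 <= n -> 0 <= b ->
  RInt (erlang_integrand n) 0 b <= int0_inf (erlang_integrand n).
Proof.
  intros Hn; apply partial_int_le_int0_inf.
  - intros b' Hb'; apply ex_RInt_erlang; lra.
  - apply erlang_integrand_ge0.
  - apply erlang_partial_bounded, Hn.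
Qed.

(* For n >= lam the integrand dominates the derivative of
   -e^{-lam t} (1+t)^n / lam, which is the integrand minus the nonnegative
   term (n - lam)/lam e^{-lam t} (1+t)^{n-1}. *)
Lemma erlang_partial_lower (n b : R) : lam <= n -> 0 <= b ->
  (1 - exp (- lam * b) * Rpower (1 + b) n) / lam <= RInt (erlang_integrand n) 0 b.
Proof.
  intros Hn Hb.
  set (G := fun t => - (exp (- lam * t) * Rpower (1 + t) n) / lam).
  set (dG := fun t => exp (- lam * t) * (Rpower (1 + t) n / (1 + t)) * (lam * (1 + t) - n) / lam).
  assert (HdG : is_RInt dG 0 b (minus (G b) (G 0))).
  { apply (is_RInt_derive (V := R_CompleteNormedModule)); intros t Ht;
      rewrite Rmin_left in Ht by lra; unfold G, dG, Rpower.
    - auto_derive; [lra | field; lra].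
    - apply (ex_derive_continuous (K := R_AbsRing) (V := R_NormedModule)); auto_derive; lra. }
  replace ((1 - exp (- lam * b) * Rpower (1 + b) n) / lam) with (minus (G b) (G 0))
    by (unfold minus, plus, opp, G; simpl;
        rewrite Rplus_0_r, Rmult_0_r, exp_0; unfold Rpower;
        rewrite ln_1, Rmult_0_r, exp_0; field; lra).
  rewrite <- (is_RInt_unique _ _ _ _ HdG).
  apply RInt_le; [lra | eexists; exact HdG | apply ex_RInt_erlang; lra |].
  intros t Ht; unfold dG, erlang_integrand; rewrite (Rpower_pred (1 + t) n) by lra.
  pose proof (exp_pos (- lam * t)); pose proof (Rpower_gt0 (1 + t) n).
  assert (Hterm : 0 <= exp (- lam * t) * (Rpower (1 + t) n / (1 + t)))
    by (apply Rmult_le_pos; [lra | apply Rdiv_le_0_compat; lra]).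
  apply (Rmult_le_reg_r lam); [lra |].
  replace (exp (- lam * t) * (Rpower (1 + t) n / (1 + t)) * (lam * (1 + t) - n) / lam * lam)
    with (exp (- lam * t) * (Rpower (1 + t) n / (1 + t)) * (lam * (1 + t) - n)) by (field; lra).
  nra.
Qed.

Lemma erlang_int_ge_inv (n : R) : lam <= n -> 1 <= lam * int0_inf (erlang_integrand n).
Proof.
  intros Hn; set (I := int0_inf (erlang_integrand n)).
  destruct (exp_poly_decay lam n Hlam ltac:(lra)) as [C [HC Hdecay]].
  apply Rnot_lt_le; intros HI.
  set (b := C / (1 - lam * I)).
  assert (Hb : 0 < b) by (apply Rdiv_lt_0_compat; lra).
  assert (Hlow := erlang_partial_lower n b Hn ltac:(lra)).
  assert (Hup := erlang_partial_le_int n b ltac:(lra) ltac:(lra)); fold I in Hup.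
  assert (Htail := Hdecay b ltac:(lra)).
  assert (Hsmall : C / (1 + b) ^ 2 < 1 - lam * I).
  { apply (Rmult_lt_reg_r ((1 + b) ^ 2)); [apply pow_lt; lra |].
    replace (C / (1 + b) ^ 2 * (1 + b) ^ 2) with C by (field; lra).
    assert (Hbdef : b * (1 - lam * I) = C) by (unfold b; field; lra).
    nra. }
  assert (Hscale : 1 - exp (- lam * b) * Rpower (1 + b) n <= lam * I).
  { apply (Rmult_le_reg_r (/ lam)); [apply Rinv_0_lt_compat; lra |].
    replace (lam * I * / lam) with I by (field; lra); lra. }
  lra.
Qed.

Lemma erlang_integrand_gap (n1 n2 t : R) : 0 <= n1 < n2 -> 1 / 2 <= t <= 1 ->
  exp (- lam) / 4 * (Rpower (3 / 2) (n2 - n1) - 1) <= erlang_integrand n2 t - erlang_integrand n1 t.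
Proof.
  intros Hn Ht; unfold erlang_integrand.
  assert (Hsplit : Rpower (1 + t) (n2 - 1) = Rpower (1 + t) (n1 - 1) * Rpower (1 + t) (n2 - n1))
    by (rewrite <- Rpower_plus; f_equal; ring).
  assert (Hbase : / 2 <= Rpower (1 + t) (n1 - 1)).
  { apply Rle_trans with (Rpower (1 + t) (Ropp 1)).
    - rewrite Rpower_Ropp, Rpower_1 by lra; apply Rinv_le_contravar; lra.
    - apply Rle_Rpower; lra. }
  assert (Hgrow : Rpower (3 / 2) (n2 - n1) <= Rpower (1 + t) (n2 - n1)) by (apply Rle_Rpower_l; lra).
  assert (Hexp : exp (- lam) <= exp (- lam * t)).
  { destruct (Req_dec t 1) as [-> | Ht1]; [rewrite Rmult_1_r; lra |].
    left; apply exp_increasing; nra. }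
  assert (Hgt1 : 1 < Rpower (3 / 2) (n2 - n1)).
  { rewrite <- (Rpower_O (3 / 2)) at 1 by lra; apply Rpower_lt; lra. }
  pose proof (exp_pos (- lam)).
  rewrite Hsplit.
  replace (t * exp (- lam * t) * (Rpower (1 + t) (n1 - 1) * Rpower (1 + t) (n2 - n1))
           - t * exp (- lam * t) * Rpower (1 + t) (n1 - 1))
    with ((t * exp (- lam * t)) * (Rpower (1 + t) (n1 - 1) * (Rpower (1 + t) (n2 - n1) - 1)))
    by ring.
  replace (exp (- lam) / 4 * (Rpower (3 / 2) (n2 - n1) - 1))
    with ((1 / 2 * exp (- lam)) * (/ 2 * (Rpower (3 / 2) (n2 - n1) - 1))) by field.
  apply Rmult_le_compat; [nra | nra | nra | apply Rmult_le_compat; lra].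
Qed.

Lemma erlang_int_strict (n1 n2 : R) : 0 <= n1 < n2 ->
  int0_inf (erlang_integrand n1) < int0_inf (erlang_integrand n2).
Proof.
  intros Hn.
  set (gap := exp (- lam) / 4 * (Rpower (3 / 2) (n2 - n1) - 1)).
  assert (Hgap : 0 < gap).
  { assert (1 < Rpower (3 / 2) (n2 - n1))
      by (rewrite <- (Rpower_O (3 / 2)) at 1 by lra; apply Rpower_lt; lra).
    pose proof (exp_pos (- lam)); unfold gap; nra. }
  apply (improper_int0_lt _ _ _ _ (gap * (1 - 1 / 2)) (erlang_improper n1 ltac:(lra))
           (erlang_improper n2 ltac:(lra))); [nra |].
  intros b Hb.
  rewrite <- (RInt_minus (V := R_CompleteNormedModule)) by (apply ex_RInt_erlang; lra).
  apply RInt_ge_on_subinterval; try lra.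
  - apply (ex_RInt_minus (V := R_NormedModule)); apply ex_RInt_erlang; lra.
  - intros t Ht; unfold minus, plus, opp; simpl.
    assert (Hmono : erlang_integrand n1 t <= erlang_integrand n2 t).
    { unfold erlang_integrand.
      assert (Rpower (1 + t) (n1 - 1) <= Rpower (1 + t) (n2 - 1)) by (apply Rle_Rpower; lra).
      pose proof (exp_pos (- lam * t)).
      assert (0 <= t * exp (- lam * t)) by (apply Rmult_le_pos; lra).
      apply Rmult_le_compat_l; lra. }
    lra.
  - intros t Ht; unfold minus, plus, opp; simpl; apply erlang_integrand_gap; lra.
Qed.

End ErlangIntegrand.

Lemma Rmin_one_inv_lt (x1 x2 : R) : 1 <= x1 -> x1 < x2 -> Rmin 1 (/ x2) < Rmin 1 (/ x1).
Proof.
  intros Hx1 Hx12.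
  assert (Hinv1 : / x1 <= 1) by (rewrite <- Rinv_1; apply Rinv_le_contravar; lra).
  assert (Hinv12 : / x2 < / x1) by (apply Rinv_lt_contravar; nra).
  rewrite !Rmin_right by lra; exact Hinv12.
Qed.

Theorem lemma6 (lam : R) (Hlam : 0 < lam) :
  forall beta1 beta2 : R,
    0 < beta1 -> 1 <= lam + beta1 * sqrt lam ->
    0 < beta2 -> 1 <= lam + beta2 * sqrt lam ->
    beta1 < beta2 -> alpha_tilde beta2 lam < alpha_tilde beta1 lam.
Proof.
  intros beta1 beta2 Hbeta1 _ _ _ Hbeta12.
  unfold alpha_tilde, alpha_bar.
  set (n1 := lam + beta1 * sqrt lam); set (n2 := lam + beta2 * sqrt lam).
  change (fun t => t * exp (- lam * t) * Rpower (1 + t) (n1 - 1)) with (erlang_integrand lam n1).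
  change (fun t => t * exp (- lam * t) * Rpower (1 + t) (n2 - 1)) with (erlang_integrand lam n2).
  pose proof (sqrt_lt_R0 lam Hlam) as Hsqrt.
  assert (Hn1 : lam <= n1) by (unfold n1; nra).
  assert (Hn12 : n1 < n2) by (unfold n1, n2; nra).
  apply Rmin_one_inv_lt.
  - exact (erlang_int_ge_inv lam Hlam n1 Hn1).
  - apply Rmult_lt_compat_l; [exact Hlam |].
    apply erlang_int_strict; [exact Hlam | lra].
Qed.
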